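(* Let $T$ and $S$ be maps (each with finitely many points of period dividing $n$ for every $n\ge1$), and let $T\times S$ be their Cartesian product. If any two of the sequences $\mathcal O_T$, $\mathcal O_S$, $\mathcal O_{T\times S}$ are multiplicative, then so is the third.
   Context: For a map $T:X\to X$, $\mathcal O_T(n)$ denotes the number of closed orbits of length $n$ under $T$ (sets $\{x,Tx,\dots,T^{n-1}x\}$ with $T^nx=x$ of cardinality exactly $n$), and $\mathcal F_T(n)=|\{x:T^nx=x\}|$. A sequence $f:\mathbb N\to\mathbb Z$ is multiplicative if $f(1)=1$ and $f(mn)=f(m)f(n)$ whenever $\gcd(m,n)=1$. $T\times S$ denotes the map $(x,y)\mapsto(Tx,Sy)$. *)

From mathcomp Require Import all_boot all_order all_algebra.
From mathcomp Require Import finmap boolp classical_sets cardinality.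
Set Implicit Arguments. Unset Strict Implicit. Unset Printing Implicit Defensive.
Import GRing.Theory.
Local Open Scope classical_set_scope.
Local Open Scope fset_scope.

Definition per_pts (X : Type) (T : X -> X) (n : nat) : set X :=
  [set x | iter n T x = x].

Definition fin_periodic (X : Type) (T : X -> X) : Prop :=
  forall n : nat, (0 < n)%N -> finite_set (per_pts T n).

Definition FixCount (X : choiceType) (T : X -> X) (n : nat) : nat :=
  #|` fset_set (per_pts T n)|.

Definition closed_orbit (X : choiceType) (T : X -> X) (n : nat) (A : set X) : Prop :=
  exists x : X, iter n T x = x /\
    A = [set iter k T x | k in [set k : nat | (k < n)%N]] /\
    finite_set A /\ #|` fset_set A| = n.

Definition OrbCount (X : choiceType) (T : X -> X) (n : nat) : nat :=
  #|` fset_set (closed_orbit T n)|.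

Definition multiplicative (f : nat -> int) : Prop :=
  f 1%N = 1%R /\
  forall m n : nat, (0 < m)%N -> (0 < n)%N -> coprime m n ->
    f (m * n)%N = (f m * f n)%R.

Definition prod_map (X Y : Type) (T : X -> X) (S : Y -> Y) : X * Y -> X * Y :=
  fun p => (T p.1, S p.2).

From Pilot Require Import Defs.
From mathcomp Require Import all_boot all_order all_algebra.
From mathcomp Require Import finmap boolp classical_sets cardinality.
From mathcomp Require Import zify.
Set Implicit Arguments. Unset Strict Implicit. Unset Printing Implicit Defensive.
Import GRing.Theory.
(* Re-imported so that [multiplicative] denotes Defs.multiplicative rather than
   the deprecated GRing.Theory.multiplicative. *)
Import Defs.

(* Sorting the points of period dividing n by their exact period d (a divisor
   of n), and noting that the points of exact period d are partitioned into
   the closed orbits of length d, each of size d, gives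
     F_T(n) = \sum_(d | n) d * O_T(d).
   Multiplying a sequence by n, or summing it over divisors, preserves and
   reflects multiplicativity, so O_T is multiplicative iff F_T is. Finally
   F_(T x S) = F_T * F_S, and multiplicativity passes to products and, since
   F_T(n) >= F_T(1) = 1 when F_T is multiplicative, to quotients. *)

Section ExactPeriod.
Variables (X : eqType) (T : X -> X).

Definition exact_period (x : X) (d : nat) :=
  [&& 0 < d, iter d T x == x & uniq (traject T x d)].

Lemma iter_modn_period x d m : iter d T x = x -> iter m T x = iter (m %% d) T x.
Proof.
move=> xd; rewrite {1}(divn_eq m d) addnC iterD; congr iter.
by elim: (m %/ d) => // q IHq; rewrite mulSn iterD IHq.
Qed.

Lemma mem_traject_period x d k : 0 < d -> iter d T x = x ->
  iter k T x \in traject T x d.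
Proof.
move=> d_gt0 xd; apply/trajectP; exists (k %% d); first exact: ltn_pmod.
exact: iter_modn_period.
Qed.

Lemma traject_uniq_inj x d i j : uniq (traject T x d) -> i < d -> j < d ->
  iter i T x = iter j T x -> i = j.
Proof.
move=> uxd id jd eij; apply/eqP.
by rewrite -(nth_uniq x _ _ uxd) ?size_traject // !nth_traject // eij.
Qed.

Lemma traject_period_iter x d j : 0 < d -> iter d T x = x ->
  traject T (iter j T x) d =i traject T x d.
Proof.
move=> d_gt0 xd; set y := iter j T x.
have yd : iter d T y = y by rewrite -iterD addnC iterD xd.
have xy : x = iter (d * j.+1 - j) T y.
  rewrite -iterD subnK; last by nia.
  by rewrite mulnC (iter_modn_period _ xd) modnMl.
move=> z; apply/idP/idP => /trajectP[k _ ->].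
  by rewrite -iterD mem_traject_period.
by rewrite [in iter k T x]xy -iterD mem_traject_period.
Qed.

Lemma exact_period_iter x d j : exact_period x d -> exact_period (iter j T x) d.
Proof.
case/and3P => d_gt0 /eqP xd uxd.
rewrite /exact_period d_gt0 -iterD addnC iterD xd eqxx /=.
rewrite (uniq_size_uniq uxd) ?size_traject // => z.
by rewrite traject_period_iter.
Qed.

Lemma exact_period_unique x d e : exact_period x d -> exact_period x e -> d = e.
Proof.
case/and3P => d_gt0 /eqP xd uxd; case/and3P => e_gt0 /eqP xe uxe.
have [lt_de|lt_ed|//] := ltngtP d e.
  by have := traject_uniq_inj uxe lt_de e_gt0 xd => d0; rewrite d0 in d_gt0.
by have := traject_uniq_inj uxd lt_ed d_gt0 xe => e0; rewrite e0 in e_gt0.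
Qed.

Lemma exact_period_dvdn x d n : exact_period x d -> iter n T x = x -> d %| n.
Proof.
case/and3P => d_gt0 /eqP xd uxd xn; apply/eqP.
rewrite (iter_modn_period _ xd) in xn.
exact: traject_uniq_inj uxd (ltn_pmod _ d_gt0) d_gt0 xn.
Qed.

Lemma exact_period_exists x n : 0 < n -> iter n T x = x -> exists d, exact_period x d.
Proof.
move=> n_gt0 xn.
have [|d /andP[d_gt0 /eqP xd] d_min] :=
  ex_minnP (P := fun k => (0 < k) && (iter k T x == x)).
  by exists n; rewrite n_gt0 xn eqxx.
exists d; rewrite /exact_period d_gt0 xd eqxx /=.
case: d d_gt0 xd d_min => // d _ xd d_min; rewrite looping_uniq.
apply/trajectP => -[i lt_id xdi].
have xi : iter i.+1 T x = x by rewrite iterS -xdi -iterS.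
by have := d_min i.+1; rewrite xi eqxx ltnS => /(_ isT); lia.
Qed.

End ExactPeriod.

Local Open Scope classical_set_scope.

Lemma sum_nat_bool_count (I : Type) (r : seq I) (a : pred I) :
  \sum_(i <- r) (a i : nat) = count a r.
Proof. by elim: r => [|i r IHr]; rewrite ?big_nil ?big_cons //= IHr. Qed.

Lemma card_fset_set_seq (X : choiceType) (s : seq X) :
  #|` fset_set [set` s]| = size (undup s).
Proof.
have -> : [set` s] = [set` [fset x in s]%fset].
  by apply/seteqP; split=> x /=; rewrite inE.
by rewrite set_fsetK card_fseq.
Qed.

Lemma card_fset_set_count (X : choiceType) (A : set X) (s : seq X) :
  uniq s -> A `<=` [set` s] -> #|` fset_set A| = count (mem A) s.
Proof.
move=> us sAs; rewrite -size_filter -(undup_id (filter_uniq _ us)).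
rewrite -card_fset_set_seq; congr (#|` fset_set _|).
apply/seteqP; split=> x /=; rewrite mem_filter ?inE.
  by move=> Ax; rewrite (sAs x Ax) andbT; apply/asboolP.
by case/andP => /asboolP.
Qed.

Lemma cardfsM (K K' : choiceType) (A : {fset K}) (B : {fset K'}) :
  #|` (A `*` B)%fset| = (#|` A| * #|` B|)%N.
Proof.
have uAB : uniq [seq (a, b) | a <- A, b <- B].
  by apply: allpairs_uniq; rewrite ?fset_uniq // => -[? ?] [? ?] _ _ [-> ->].
rewrite -(size_allpairs pair) -(undup_id uAB) -card_fseq; congr (#|` _|).
apply/fsetP => -[a b]; rewrite in_fsetM inE /=.
apply/andP/allpairsP => [[aA bB]|[[a' b'] [/= ? ? [-> ->]]]] //.
by exists (a, b).
Qed.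

Section ClosedOrbits.
Variables (X : choiceType) (T : X -> X).

Lemma image_iter_traject x d :
  [set iter k T x | k in [set k | (k < d)%N]] = [set` traject T x d].
Proof.
apply/seteqP; split=> y /=.
  by case=> k kd <-; apply/trajectP; exists k.
by case/trajectP=> k kd ->; exists k.
Qed.

Lemma closed_orbitP d A : (0 < d)%N ->
  closed_orbit T d A <-> exists2 x, exact_period T x d & A = [set` traject T x d].
Proof.
move=> d_gt0; split.
  case=> x [xd [-> [_]]]; rewrite image_iter_traject card_fset_set_seq => cardA.
  exists x => //; rewrite /exact_period d_gt0 xd eqxx /= -[uniq _]negbK.
  by rewrite -ltn_size_undup cardA size_traject ltnn.
case=> x /and3P[_ /eqP xd uxd] ->; exists x; rewrite image_iter_traject.
by rewrite card_fset_set_seq undup_id ?size_traject.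
Qed.

Lemma closed_orbit_mem d A x : (0 < d)%N -> closed_orbit T d A -> A x ->
  exact_period T x d /\ A = [set` traject T x d].
Proof.
move=> d_gt0 /(closed_orbitP _ d_gt0)[y yd ->] /= /trajectP[k _ ->].
split; first exact: exact_period_iter.
case/and3P: yd => _ /eqP yd _.
by apply/seteqP; split=> z /=; rewrite traject_period_iter.
Qed.

End ClosedOrbits.

Section FixCountFormula.
Variables (X : choiceType) (T : X -> X).
Hypothesis finT : fin_periodic T.

Lemma finite_closed_orbit d : (0 < d)%N -> finite_set (closed_orbit T d).
Proof.
move=> d_gt0.
apply: sub_finite_set (finite_image (fun x => [set` traject T x d]) (finT d_gt0)).
move=> A /(closed_orbitP T _ d_gt0)[x /and3P[_ /eqP xd _] ->]; by exists x.
Qed.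

Lemma mem_fset_per_pts n x : (0 < n)%N ->
  (x \in fset_set (per_pts T n)) = (iter n T x == x).
Proof.
by move=> n_gt0; rewrite in_fset_set ?inE; [apply/asboolP/eqP | exact: finT].
Qed.

Lemma mem_fset_closed_orbit d A : (0 < d)%N ->
  (A \in fset_set (closed_orbit T d)) = `[< closed_orbit T d A >].
Proof. by move=> d_gt0; rewrite in_fset_set ?inE //; exact: finite_closed_orbit. Qed.

Lemma count_mem_closed_orbits d x : (0 < d)%N ->
  count (fun A => x \in A) (fset_set (closed_orbit T d)) = exact_period T x d.
Proof.
move=> d_gt0; set A0 := [set` traject T x d].
have memA A : A \in fset_set (closed_orbit T d) ->
    (x \in A) = (A == A0) && exact_period T x d.
  rewrite mem_fset_closed_orbit // => /asboolP orbA.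
  apply/idP/idP => [/set_mem /(closed_orbit_mem d_gt0 orbA)[-> ->]|]; first by rewrite eqxx.
  by case/andP => /eqP -> _; rewrite inE; apply/trajectP; exists 0.
rewrite (eq_in_count memA); case: (boolP (exact_period T x d)) => xd.
  rewrite (eq_count (a2 := pred1 A0)) => [|A]; last by rewrite andbT.
  rewrite count_uniq_mem ?fset_uniq // mem_fset_closed_orbit //.
  by rewrite asboolT //; apply/(closed_orbitP T A0 d_gt0); exists x.
by apply/eqP; rewrite eqn0Ngt -has_count; apply/hasP => -[A _]; rewrite andbF.
Qed.

Lemma count_exact_period_divisors n x : (0 < n)%N -> iter n T x = x ->
  count (exact_period T x) (divisors n) = 1%N.
Proof.
move=> n_gt0 xn; have [d xd] := exact_period_exists n_gt0 xn.
rewrite (eq_count (a2 := pred1 d)) => [|e].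
  by rewrite count_uniq_mem ?divisors_uniq // -dvdn_divisors // (exact_period_dvdn xd).
apply/idP/eqP => [xe|->//]; exact: exact_period_unique xe xd.
Qed.

Lemma count_per_pts_closed_orbit n d A : (0 < n)%N -> (d %| n)%N ->
  closed_orbit T d A -> count (mem A) (fset_set (per_pts T n)) = d.
Proof.
move=> n_gt0 dn orbA; have [_ [_ [_ [_ cardA]]]] := orbA.
rewrite -[RHS]cardA -card_fset_set_count ?fset_uniq // => y Ay /=.
have [/and3P[_ /eqP yd _] _] := closed_orbit_mem (dvdn_gt0 n_gt0 dn) orbA Ay.
by rewrite mem_fset_per_pts // (iter_modn_period _ yd) (eqP dn).
Qed.

Lemma fix_count_divisor_sum n : (0 < n)%N ->
  FixCount T n = \sum_(d <- divisors n) d * OrbCount T d.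
Proof.
move=> n_gt0; set P := fset_set (per_pts T n).
have per_x x : x \in P -> iter n T x = x by rewrite mem_fset_per_pts // => /eqP.
transitivity (\sum_(x <- P) \sum_(d <- divisors n)
               \sum_(A <- fset_set (closed_orbit T d)) (x \in A : nat)).
  rewrite /FixCount -/P -sum1_size; apply: eq_big_seq => x /per_x xn.
  rewrite -(count_exact_period_divisors n_gt0 xn) -sum_nat_bool_count.
  apply: eq_big_seq => d; rewrite -dvdn_divisors // => /(dvdn_gt0 n_gt0) d_gt0.
  by rewrite sum_nat_bool_count count_mem_closed_orbits.
rewrite exchange_big; apply: eq_big_seq => d; rewrite -dvdn_divisors // => dn.
rewrite exchange_big /OrbCount -sum1_size big_distrr /=; apply: eq_big_seq => A.
rewrite mem_fset_closed_orbit ?(dvdn_gt0 n_gt0) // => /asboolP orbA; rewrite muln1.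
by rewrite sum_nat_bool_count (count_per_pts_closed_orbit n_gt0 dn orbA).
Qed.

End FixCountFormula.

Section ProductMap.
Variables (X Y : choiceType) (T : X -> X) (S : Y -> Y).

Lemma iter_prod_map n p : iter n (prod_map T S) p = (iter n T p.1, iter n S p.2).
Proof. by elim: n => [|n IHn] /=; [case: p | rewrite IHn]. Qed.

Lemma per_pts_prod_map n : per_pts (prod_map T S) n = per_pts T n `*` per_pts S n.
Proof.
apply/seteqP; split=> -[x y]; rewrite /per_pts /= iter_prod_map /=.
  by case=> -> ->.
by case=> -> ->.
Qed.

Hypotheses (finT : fin_periodic T) (finS : fin_periodic S).

Lemma fin_periodic_prod_map : fin_periodic (prod_map T S).
Proof.
by move=> n n_gt0; rewrite per_pts_prod_map; apply: finite_setX; [exact: finT | exact: finS].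
Qed.

Lemma fix_count_prod_map n : (0 < n)%N ->
  FixCount (prod_map T S) n = (FixCount T n * FixCount S n)%N.
Proof.
move=> n_gt0; rewrite /FixCount per_pts_prod_map fset_setX ?cardfsM //.
  exact: finT.
exact: finS.
Qed.

End ProductMap.

Lemma gcdn_coprime_mul_dvdn m n a b : coprime m n -> a %| m -> b %| n ->
  gcdn m (a * b) = a.
Proof.
move=> co_mn am bn; rewrite Gauss_gcdl ?(gcdn_idPr am) //.
exact: coprime_dvdr bn co_mn.
Qed.

Lemma dvdn_coprime_split m n d : coprime m n -> d %| m * n ->
  d = gcdn m d * gcdn n d.
Proof.
move=> co_mn dmn; apply/eqP; rewrite eqn_dvd; apply/andP; split; last first.
  rewrite Gauss_dvd ?dvdn_gcdr //.
  exact: coprime_dvdl (dvdn_gcdl _ _) (coprime_dvdr (dvdn_gcdl _ _) co_mn).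
have d_mdn : d %| gcdn m d * n by rewrite muln_gcdl dvdn_gcd dmn dvdn_mulr.
by rewrite muln_gcdr dvdn_gcd d_mdn dvdn_mull.
Qed.

Lemma perm_divisors_coprime m n : 0 < m -> 0 < n -> coprime m n ->
  perm_eq (divisors (m * n)) [seq a * b | a <- divisors m, b <- divisors n].
Proof.
move=> m_gt0 n_gt0 co_mn; have co_nm := co_mn; rewrite coprime_sym in co_nm.
have gcd_a a b : a \in divisors m -> b \in divisors n -> gcdn m (a * b) = a.
  by rewrite -!dvdn_divisors //; exact: gcdn_coprime_mul_dvdn.
have gcd_b a b : a \in divisors m -> b \in divisors n -> gcdn n (a * b) = b.
  by rewrite mulnC -!dvdn_divisors // => am bn; exact: gcdn_coprime_mul_dvdn co_nm bn am.
apply: uniq_perm; rewrite ?divisors_uniq //.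
  apply: allpairs_uniq; rewrite ?divisors_uniq // => -[a b] [c d] /=.
  move=> /allpairsP[[a' b'] /= [am bn [-> ->]]].
  move=> /allpairsP[[c' d'] /= [cm dn [-> ->]]] eq_ab_cd.
  have -> : a' = c' by rewrite -(gcd_a a' b') // eq_ab_cd gcd_a.
  by have -> : b' = d' by rewrite -(gcd_b a' b') // eq_ab_cd gcd_b.
move=> d; rewrite -dvdn_divisors ?muln_gt0 ?m_gt0 //; apply/idP/allpairsP => [dmn|].
  exists (gcdn m d, gcdn n d); rewrite /= -!dvdn_divisors ?dvdn_gcdl //.
  by split=> //; exact: dvdn_coprime_split.
by case=> -[a b] /= []; rewrite -!dvdn_divisors // => am bn ->; exact: dvdn_mul.
Qed.

Lemma big_divisors_coprime (R : nmodType) (h : nat -> R) m n :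
  0 < m -> 0 < n -> coprime m n ->
  (\sum_(d <- divisors (m * n)) h d =
   \sum_(a <- divisors m) \sum_(b <- divisors n) h (a * b))%R.
Proof.
move=> m_gt0 n_gt0 co_mn.
by rewrite (perm_big _ (perm_divisors_coprime m_gt0 n_gt0 co_mn)) big_allpairs_dep.
Qed.

Lemma ltn_mul_dvdn a b m n : 0 < m -> 0 < n -> a %| m -> b %| n ->
  (a, b) != (m, n) -> a * b < m * n.
Proof.
move=> m_gt0 n_gt0 am bn; rewrite xpair_eqE negb_and.
have a_gt0 := dvdn_gt0 m_gt0 am; have b_gt0 := dvdn_gt0 n_gt0 bn.
have := dvdn_leq m_gt0 am; have := dvdn_leq n_gt0 bn.
by move=> le_bn le_am /orP[]/eqP ne; nia.
Qed.

Local Open Scope ring_scope.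

Section Multiplicative.
Implicit Types f g : nat -> int.

Lemma multiplicative_eq f g : (forall n, (0 < n)%N -> f n = g n) ->
  multiplicative f -> multiplicative g.
Proof.
move=> eq_fg [f1 fM]; split=> [|m n m_gt0 n_gt0 co_mn]; first by rewrite -eq_fg.
by rewrite -!eq_fg ?muln_gt0 ?m_gt0 // fM.
Qed.

Lemma multiplicativeM f g : multiplicative f -> multiplicative g ->
  multiplicative (fun n => f n * g n).
Proof.
move=> [f1 fM] [g1 gM]; split=> [|m n m_gt0 n_gt0 co_mn]; first by rewrite f1 g1 mulr1.
by rewrite fM // gM // mulrACA.
Qed.

Lemma multiplicative_cancel f g : multiplicative f ->
  (forall n, (0 < n)%N -> f n != 0) ->
  multiplicative (fun n => f n * g n) -> multiplicative g.
Proof.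
move=> [f1 fM] f_neq0 [fg1 fgM]; split=> [|m n m_gt0 n_gt0 co_mn].
  by rewrite f1 mul1r in fg1.
have mn_gt0 : (0 < m * n)%N by rewrite muln_gt0 m_gt0.
by apply: (mulfI (f_neq0 _ mn_gt0)); rewrite fgM // fM // mulrACA.
Qed.

Lemma multiplicative_natz : multiplicative (fun n => n%:Z).
Proof. by split=> // m n _ _ _; rewrite PoszM. Qed.

Lemma multiplicative_natzM g :
  multiplicative (fun n => n%:Z * g n) <-> multiplicative g.
Proof.
split; last exact: multiplicativeM multiplicative_natz.
by apply: multiplicative_cancel multiplicative_natz _ => n; rewrite eqz_nat -lt0n.
Qed.

Section DivisorSum.
Variables g F : nat -> int.
Hypothesis F_sum : forall n, (0 < n)%N -> F n = \sum_(d <- divisors n) g d.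

Lemma divisor_sum_coprime m n : (0 < m)%N -> (0 < n)%N -> coprime m n ->
  F (m * n)%N - F m * F n =
  \sum_(a <- divisors m) \sum_(b <- divisors n) (g (a * b)%N - g a * g b).
Proof.
move=> m_gt0 n_gt0 co_mn.
rewrite !F_sum ?muln_gt0 ?m_gt0 // big_divisors_coprime // big_distrlr -sumrB.
by apply: eq_bigr => a _; rewrite sumrB.
Qed.

Lemma multiplicative_divisor_sum : multiplicative g -> multiplicative F.
Proof.
move=> [g1 gM]; split=> [|m n m_gt0 n_gt0 co_mn]; first by rewrite F_sum // big_seq1.
apply/eqP; rewrite -subr_eq0 divisor_sum_coprime //; apply/eqP/big1_seq => a.
rewrite -dvdn_divisors // => am; apply: big1_seq => b; rewrite -dvdn_divisors // => bn.
rewrite gM ?subrr ?(dvdn_gt0 m_gt0 am) ?(dvdn_gt0 n_gt0 bn) //.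
exact: coprime_dvdl am (coprime_dvdr bn co_mn).
Qed.

Lemma divisor_sum_multiplicative : multiplicative F -> multiplicative g.
Proof.
move=> [F1 FM]; have g1 : g 1%N = 1 by rewrite -F1 F_sum // big_seq1.
(* Strong induction on m * n: in the expansion of F (m * n) - F m * F n given by
   divisor_sum_coprime, every term but the one for (m, n) vanishes. *)
split=> // m n; move: {2}(m * n)%N (leqnn (m * n)) => k.
elim: k m n => [|k IHk] m n le_mn_k m_gt0 n_gt0 co_mn.
  by move: le_mn_k; rewrite leqn0 muln_eq0 -!leqn0 leqNgt m_gt0 leqNgt n_gt0.
set D := fun p : nat * nat => g (p.1 * p.2)%N - g p.1 * g p.2.
set P := [seq (a, b) | a <- divisors m, b <- divisors n].
have mnP : (m, n) \in P by apply: allpairs_f; apply: divisors_id.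
have uP : uniq P.
  by apply: allpairs_uniq; rewrite ?divisors_uniq // => -[? ?] [? ?] _ _ [-> ->].
have D0 p : p \in P -> p != (m, n) -> D p = 0.
  case/allpairsP=> -[a b] [/=]; rewrite -!dvdn_divisors // => am bn -> ne_ab.
  apply/eqP; rewrite subr_eq0; apply/eqP/IHk.
  - by rewrite -ltnS (leq_trans (ltn_mul_dvdn m_gt0 n_gt0 am bn ne_ab)).
  - exact: dvdn_gt0 m_gt0 am.
  - exact: dvdn_gt0 n_gt0 bn.
  - exact: coprime_dvdl am (coprime_dvdr bn co_mn).
have : \sum_(p <- P) D p = 0.
  by rewrite big_allpairs -divisor_sum_coprime // FM // subrr.
rewrite (bigD1_seq _ mnP uP) /= big1_seq ?addr0 => [/eqP|p /andP[ne pP]].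
  by rewrite subr_eq0 => /eqP.
exact: D0.
Qed.

End DivisorSum.

End Multiplicative.

Section OrbitFixMultiplicative.
Variables (X : choiceType) (T : X -> X).
Hypothesis finT : fin_periodic T.

Lemma leq_fix_count1 n : (0 < n)%N -> (FixCount T 1 <= FixCount T n)%N.
Proof.
move=> n_gt0; apply/fsubset_leq_card; rewrite -fset_set_sub; [|exact: finT..].
by move=> x /= x1; rewrite /per_pts /= (iter_modn_period _ x1) modn1.
Qed.

Lemma fix_count_neq0 : multiplicative (fun n => (FixCount T n)%:Z) ->
  forall n, (0 < n)%N -> (FixCount T n)%:Z != 0.
Proof.
move=> [[F1] _] n n_gt0; rewrite eqz_nat -lt0n.
by apply: leq_trans (leq_fix_count1 n_gt0); rewrite F1.
Qed.

Lemma multiplicative_orbit_fix :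
  multiplicative (fun n => (OrbCount T n)%:Z) <->
  multiplicative (fun n => (FixCount T n)%:Z).
Proof.
have F_sum n : (0 < n)%N ->
    (FixCount T n)%:Z = \sum_(d <- divisors n) (d%:Z * (OrbCount T d)%:Z).
  move=> n_gt0; rewrite fix_count_divisor_sum // -natz natr_sum.
  by apply: eq_bigr => d _; rewrite natrM !natz.
rewrite -multiplicative_natzM.
split; [exact: multiplicative_divisor_sum | exact: divisor_sum_multiplicative].
Qed.

End OrbitFixMultiplicative.

Theorem lemma3p1 (X Y : choiceType) (T : X -> X) (S : Y -> Y)
  (hT : fin_periodic T) (hS : fin_periodic S) :
  let oT := fun n => ((OrbCount T n)%:Z)%R in
  let oS := fun n => ((OrbCount S n)%:Z)%R in
  let oTS := fun n => ((OrbCount (prod_map T S) n)%:Z)%R in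
  (multiplicative oT -> multiplicative oS -> multiplicative oTS) /\
  (multiplicative oT -> multiplicative oTS -> multiplicative oS) /\
  (multiplicative oS -> multiplicative oTS -> multiplicative oT).
Proof.
move=> oT oS oTS; have hTS := fin_periodic_prod_map hT hS.
rewrite /oT /oS /oTS !multiplicative_orbit_fix //.
have fix_TS n : (0 < n)%N ->
    (FixCount (prod_map T S) n)%:Z = (FixCount T n)%:Z * (FixCount S n)%:Z.
  by move=> n_gt0; rewrite fix_count_prod_map // PoszM.
split; [|split] => [mT mS|mT mTS|mS mTS].
- by apply: multiplicative_eq (multiplicativeM mT mS) => n n_gt0; rewrite fix_TS.
- apply: multiplicative_cancel mT (fix_count_neq0 hT mT) _.
  by apply: multiplicative_eq mTS => n n_gt0; rewrite fix_TS.
- apply: multiplicative_cancel mS (fix_count_neq0 hS mS) _.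
  by apply: multiplicative_eq mTS => n n_gt0; rewrite fix_TS // mulrC.
Qed.
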